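(* There exists an operator $T\in B(\ell^2)$ which is similar to a contraction but whose mean transform $M(T)$ is not power bounded, i.e. $\sup_{n\ge1}\|M(T)^n\|=\infty$.
   Context: For $T\in B(H)$ with polar decomposition $T=V|T|$ ($|T|=(T^*T)^{1/2}$, $V$ the partial isometry with $\ker V=\ker T$), the mean transform is $M(T)=\frac12(|T|V+V|T|)$. $T$ is similar to a contraction if there is an invertible $L\in B(H)$ with $\|L^{-1}TL\|\le1$. *)

(* Operators are functions on
   sequences; only their behaviour on l^2 matters. *)
From Stdlib Require Import Reals.
From Coquelicot Require Import Coquelicot.
Open Scope R_scope.

Definition vec := nat -> C.

Definition in_l2 (x : vec) : Prop := ex_series (fun n => (Cmod (x n)) ^ 2).

Definition l2norm (x : vec) : R := sqrt (Series (fun n => (Cmod (x n)) ^ 2)).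

Definition inner (x y : vec) : C :=
  (Series (fun n => Re (Cmult (x n) (Cconj (y n)))),
   Series (fun n => Im (Cmult (x n) (Cconj (y n))))).

Definition zero_vec : vec := fun _ => 0%C.

Definition bounded_op (A : vec -> vec) : Prop :=
  (forall x, in_l2 x -> in_l2 (A x)) /\
  (forall (x y : vec) (a : C), in_l2 x -> in_l2 y ->
     A (fun n => Cplus (x n) (Cmult a (y n))) =
     (fun n => Cplus (A x n) (Cmult a (A y n)))) /\
  (exists c : R, forall x, in_l2 x -> l2norm (A x) <= c * l2norm x).

Definition similar_to_contraction (T : vec -> vec) : Prop :=
  exists L Linv : vec -> vec,
    bounded_op L /\ bounded_op Linv /\
    (forall x, in_l2 x -> Linv (L x) = x) /\
    (forall x, in_l2 x -> L (Linv x) = x) /\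
    (forall x, in_l2 x -> l2norm (Linv (T (L x))) <= l2norm x).

Definition positive_op (P : vec -> vec) : Prop :=
  forall x, in_l2 x -> Im (inner (P x) x) = 0 /\ 0 <= Re (inner (P x) x).

(* P^2 = T^* T, i.e. <P P x, y> = <T x, T y> for all x y in l^2 *)
Definition sq_eq_TstarT (P T : vec -> vec) : Prop :=
  forall x y, in_l2 x -> in_l2 y -> inner (P (P x)) y = inner (T x) (T y).

(* V is a partial isometry: isometric on (ker V)^perp *)
Definition partial_isometry (V : vec -> vec) : Prop :=
  forall x, in_l2 x ->
    (forall z, in_l2 z -> V z = zero_vec -> inner x z = 0%C) ->
    l2norm (V x) = l2norm x.

Definition polar_decomposition (T P V : vec -> vec) : Prop :=
  bounded_op P /\ bounded_op V /\
  positive_op P /\ sq_eq_TstarT P T /\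
  partial_isometry V /\
  (forall x, in_l2 x -> (V x = zero_vec <-> T x = zero_vec)) /\
  (forall x, in_l2 x -> T x = V (P x)).

Definition mean_transform (P V : vec -> vec) : vec -> vec :=
  fun x n => Cmult (/ 2)%C (Cplus (P (V x) n) (V (P x) n)).

Definition power_bounded (A : vec -> vec) : Prop :=
  exists C0 : R, forall (n : nat) x, (1 <= n)%nat -> in_l2 x ->
    l2norm (Nat.iter n A x) <= C0 * l2norm x.

(* Let T be the weighted shift T e_j = w_j e_(j+1) on l^2 with positive
   bounded weights w.  Then |T| = diag(w) and the phase is the unilateral
   shift S; conversely, positivity of |T| and T = V|T| force EVERY polar
   decomposition (P, V) of T to satisfy P e_j = w_j e_j and V e_j = e_(j+1).
   Hence M(T) e_j = ((w_j + w_(j+1)) / 2) e_(j+1) is itself a weighted shift.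
   If w_j = d_(j+1) / d_j for a sequence d bounded above and away from 0,
   then diag(d)^-1 T diag(d) = S, so T is similar to a contraction.

   The example takes w = 2, 1/2, 2, 1/2, ... (d = 1, 2, 1, 2, ...): every
   mean weight equals 5/4, so M(T)^n e_0 = (5/4)^n e_n is unbounded. *)

From Stdlib Require Import Reals Lra Lia FunctionalExtensionality.
From Coquelicot Require Import Coquelicot.
Open Scope R_scope.

Ltac unfold_C := unfold Cmult, Cplus, Cconj, Copp, Cminus, RtoC, Re, Im in *; simpl in *.

Lemma is_series_single (a : nat -> R) (i : nat) :
  (forall n, n <> i -> a n = 0) -> is_series a (a i).
Proof.
  revert a; induction i as [|i IH]; intros a Ha; apply is_series_decr_1.
  - match goal with |- is_series _ ?l => replace l with 0
      by (unfold plus, opp; simpl; ring) end.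
    unfold is_series; apply (filterlim_ext (fun _ => 0)); [|apply filterlim_const].
    intros n; induction n as [|n IHn].
    + rewrite sum_O; symmetry; apply Ha; lia.
    + rewrite sum_Sn, <- IHn, Ha by lia; unfold plus; simpl; ring.
  - rewrite (Ha 0%nat) by lia.
    match goal with |- is_series _ ?l => replace l with (a (S i))
      by (unfold plus, opp; simpl; ring) end.
    apply (IH (fun k => a (S k))); intros n Hn; apply Ha; lia.
Qed.

Lemma Series_single (a : nat -> R) (i : nat) :
  (forall n, n <> i -> a n = 0) -> Series a = a i.
Proof. intros Ha; apply is_series_unique, is_series_single, Ha. Qed.

Lemma Series_nonneg (a : nat -> R) :
  (forall n, 0 <= a n) -> ex_series a -> 0 <= Series a.
Proof.
  intros Ha Ea; rewrite <- (Series_single (fun _ => 0) 0) by auto.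
  apply Series_le; [intros n; split; [lra|apply Ha]|exact Ea].
Qed.

Lemma in_l2_zero : in_l2 zero_vec.
Proof.
  exists (Cmod (zero_vec 0%nat) ^ 2).
  apply (is_series_single (fun n => Cmod (zero_vec n) ^ 2)).
  intros n _; unfold zero_vec; rewrite Cmod_0; ring.
Qed.

(* l^2 is a vector space: closed under x + c y, using |u + v|^2 <= 2|u|^2 + 2|v|^2. *)
Lemma in_l2_comb (x y : vec) (c : C) : in_l2 x -> in_l2 y ->
  in_l2 (fun n => (x n + c * y n)%C).
Proof.
  intros Hx Hy.
  apply (@ex_series_le R_AbsRing R_CompleteNormedModule _
           (fun n => 2 * Cmod (x n) ^ 2 + (2 * Cmod c ^ 2) * Cmod (y n) ^ 2)).
  - intros n; unfold norm; simpl; unfold abs; simpl.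
    rewrite Rabs_pos_eq by apply pow2_ge_0.
    pose proof (Cmod_triangle (x n) (c * y n)) as Htri; rewrite Cmod_mult in Htri.
    pose proof (Cmod_ge_0 (x n + c * y n)); pose proof (Cmod_ge_0 (x n)).
    pose proof (Cmod_ge_0 (y n)); pose proof (Cmod_ge_0 c).
    assert (0 <= Cmod c * Cmod (y n)) by (apply Rmult_le_pos; auto).
    pose proof (pow2_ge_0 (Cmod (x n) - Cmod c * Cmod (y n))).
    simpl in *; nra.
  - apply (ex_series_plus (fun n => 2 * Cmod (x n) ^ 2)
                          (fun n => (2 * Cmod c ^ 2) * Cmod (y n) ^ 2)).
    + exact (ex_series_scal_l 2 (fun n => Cmod (x n) ^ 2) Hx).
    + exact (ex_series_scal_l (2 * Cmod c ^ 2) (fun n => Cmod (y n) ^ 2) Hy).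
Qed.

Lemma l2_vanish (u : vec) :
  in_l2 u -> Series (fun n => Cmod (u n) ^ 2) <= 0 -> u = zero_vec.
Proof.
  intros Hu Hsum; apply functional_extensionality; intros k; apply Cmod_eq_0.
  assert (Hk : Cmod (u k) ^ 2 <= 0).
  { apply (Rle_trans _ (Series (fun n => if Nat.eqb n k then Cmod (u k) ^ 2 else 0)));
      [|eapply Rle_trans; [|exact Hsum]].
    - rewrite (Series_single _ k), Nat.eqb_refl; [lra|].
      intros n Hn; destruct (Nat.eqb_spec n k); [contradiction|reflexivity].
    - apply Series_le; [|exact Hu]; intros n.
      destruct (Nat.eqb_spec n k) as [->|_]; split; try lra; apply pow2_ge_0. }
  pose proof (Cmod_ge_0 (u k)); nra.
Qed.

Lemma lin_zero (A : vec -> vec) : bounded_op A -> A zero_vec = zero_vec.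
Proof.
  intros [_ [HA _]].
  pose proof (HA zero_vec zero_vec 1%C in_l2_zero in_l2_zero) as H.
  replace (fun n => (zero_vec n + 1 * zero_vec n)%C) with zero_vec in H
    by (apply functional_extensionality; intros n; unfold zero_vec; ring).
  apply functional_extensionality; intros n; pose proof (equal_f H n) as Hn.
  simpl in Hn; unfold zero_vec in *.
  destruct (A (fun _ => 0%C) n) as [u v]; unfold_C; injection Hn; intros; f_equal; lra.
Qed.

Lemma lin_scal (A : vec -> vec) (x : vec) (c : C) : bounded_op A -> in_l2 x ->
  A (fun n => (c * x n)%C) = (fun n => (c * A x n)%C).
Proof.
  intros HA Hx; pose proof (lin_zero A HA) as Hzero; destruct HA as [_ [Hlin _]].
  pose proof (Hlin zero_vec x c in_l2_zero Hx) as H.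
  replace (fun n => (zero_vec n + c * x n)%C) with (fun n => (c * x n)%C) in H
    by (apply functional_extensionality; intros n; unfold zero_vec; ring).
  rewrite H, Hzero; apply functional_extensionality; intros n; unfold zero_vec; ring.
Qed.

Definition diag (c : nat -> R) (x : vec) : vec := fun n => (RtoC (c n) * x n)%C.
Definition shift (x : vec) : vec := fun n => match n with O => 0%C | S m => x m end.

Lemma diag_l2 (c : nat -> R) (K : R) (x : vec) :
  (forall n, Rabs (c n) <= K) -> in_l2 x ->
  in_l2 (diag c x) /\ l2norm (diag c x) <= K * l2norm x.
Proof.
  intros Hc Hx.
  assert (HK : 0 <= K) by (pose proof (Rabs_pos (c 0%nat)); specialize (Hc 0%nat); lra).
  assert (Hterm : forall n, 0 <= Cmod (diag c x n) ^ 2 <= K ^ 2 * Cmod (x n) ^ 2).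
  { intros n; unfold diag; rewrite Cmod_mult, Cmod_R, Rpow_mult_distr.
    split; [apply Rmult_le_pos; apply pow2_ge_0|].
    apply Rmult_le_compat_r; [apply pow2_ge_0|].
    apply pow_incr; split; [apply Rabs_pos|apply Hc]. }
  assert (Hdom : ex_series (fun n => K ^ 2 * Cmod (x n) ^ 2))
    by exact (ex_series_scal_l (K ^ 2) (fun n => Cmod (x n) ^ 2) Hx).
  split.
  - refine (@ex_series_le R_AbsRing R_CompleteNormedModule _ _ _ Hdom).
    intros n; unfold norm; simpl; unfold abs; simpl; rewrite Rabs_pos_eq; apply Hterm.
  - unfold l2norm; rewrite <- (sqrt_pow2 K HK) at 1.
    rewrite <- sqrt_mult_alt by apply pow2_ge_0.
    apply sqrt_le_1_alt; rewrite <- Series_scal_l; apply Series_le; assumption.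
Qed.

Lemma shift_l2 (x : vec) : in_l2 x -> in_l2 (shift x) /\ l2norm (shift x) = l2norm x.
Proof.
  intros Hx; split.
  - apply ex_series_incr_1, Hx.
  - unfold l2norm; rewrite Series_incr_1_aux; [reflexivity|].
    simpl; rewrite Cmod_0; ring.
Qed.

Lemma diag_bounded (c : nat -> R) (K : R) :
  (forall n, Rabs (c n) <= K) -> bounded_op (diag c).
Proof.
  intros Hc; split; [|split].
  - intros x Hx; apply (diag_l2 c K x Hc Hx).
  - intros x y a _ _; apply functional_extensionality; intros n; unfold diag; ring.
  - exists K; intros x Hx; apply (diag_l2 c K x Hc Hx).
Qed.

Lemma shift_bounded : bounded_op shift.
Proof.
  split; [|split].
  - intros x Hx; apply (shift_l2 x Hx).
  - intros x y a _ _; apply functional_extensionality; intros [|n]; simpl; ring.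
  - exists 1; intros x Hx; rewrite (proj2 (shift_l2 x Hx)); lra.
Qed.

Definition e (j : nat) : vec :=
  Nat.iter j shift (fun n => match n with O => 1%C | _ => 0%C end).

Lemma e_spec (j n : nat) : e j n = if Nat.eqb n j then 1%C else 0%C.
Proof.
  revert n; induction j as [|j IH]; intros [|n]; try reflexivity; apply IH.
Qed.

Lemma e_out (j n : nat) : n <> j -> e j n = 0%C.
Proof. intros H; rewrite e_spec; destruct (Nat.eqb_spec n j); easy. Qed.

Lemma e_at (j : nat) : e j j = 1%C.
Proof. rewrite e_spec, Nat.eqb_refl; reflexivity. Qed.

Lemma in_l2_e (j : nat) : in_l2 (e j).
Proof.
  exists (Cmod (e j j) ^ 2); apply (is_series_single (fun n => Cmod (e j n) ^ 2)).
  intros n Hn; rewrite e_out, Cmod_0 by exact Hn; ring.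
Qed.

Lemma l2norm_scaled_e (r : R) (j : nat) :
  0 <= r -> l2norm (fun n => (RtoC r * e j n)%C) = r.
Proof.
  intros Hr; unfold l2norm; rewrite (Series_single _ j).
  - rewrite e_at, Cmult_1_r, Cmod_R, Rabs_pos_eq by exact Hr; apply sqrt_pow2, Hr.
  - intros n Hn; rewrite e_out, Cmult_0_r, Cmod_0 by exact Hn; ring.
Qed.

Lemma inner_single (z w : vec) (k : nat) :
  (forall n, n <> k -> w n = 0%C) -> inner z w = (z k * Cconj (w k))%C.
Proof.
  intros Hw; unfold inner; rewrite (Series_single _ k), (Series_single (fun n => Im _) k).
  - destruct (z k * Cconj (w k))%C; reflexivity.
  - intros n Hn; rewrite Hw by exact Hn; destruct (z n); unfold_C; ring.
  - intros n Hn; rewrite Hw by exact Hn; destruct (z n); unfold_C; ring.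
Qed.

Lemma coord (z : vec) (i : nat) : inner z (e i) = z i.
Proof.
  rewrite (inner_single z (e i) i) by apply e_out.
  rewrite e_at; destruct (z i); unfold_C; f_equal; ring.
Qed.

(* Indeed u := P x - a x satisfies P u = -a u, so <P u, u> = -a ||u||^2 >= 0
   forces u = 0. This pins down |T| on eigenvectors of T^*T. *)
Lemma positive_sqrt_eigen (P : vec -> vec) (x : vec) (a : R) :
  bounded_op P -> positive_op P -> in_l2 x -> 0 < a ->
  P (P x) = (fun n => (RtoC (a * a) * x n)%C) ->
  P x = (fun n => (RtoC a * x n)%C).
Proof.
  intros HP Hpos Hx Ha HPP.
  set (u := fun n => (P x n + (- RtoC a) * x n)%C).
  assert (Hu : in_l2 u) by (apply in_l2_comb; [apply HP|]; exact Hx).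
  assert (HPu : P u = (fun n => (- RtoC a * u n)%C)).
  { destruct HP as [HPl2 [Hlin _]]; unfold u.
    rewrite Hlin, HPP by (apply HPl2 || idtac; exact Hx).
    apply functional_extensionality; intros n; cbv beta; rewrite RtoC_mult; ring. }
  destruct (Hpos u Hu) as [_ Hre]; rewrite HPu in Hre.
  change (0 <= Series (fun n => Re (- RtoC a * u n * Cconj (u n))%C)) in Hre.
  rewrite (Series_ext _ (fun n => - a * Cmod (u n) ^ 2)), Series_scal_l in Hre
    by (intros n; rewrite Cmod2_alt; destruct (u n); unfold_C; ring).
  assert (Hzero : u = zero_vec) by (apply l2_vanish; [exact Hu|nra]).
  apply functional_extensionality; intros n; pose proof (equal_f Hzero n) as Hn.
  unfold u, zero_vec in Hn.
  transitivity ((P x n + - RtoC a * x n) + RtoC a * x n)%C; [ring|].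
  rewrite Hn; ring.
Qed.

Section WeightedShift.

Variable w : nat -> R.

Definition wshift (x : vec) : vec := shift (diag w x).

Lemma wshift_e (j : nat) : wshift (e j) = (fun n => (RtoC (w j) * e (S j) n)%C).
Proof.
  apply functional_extensionality; intros [|m]; unfold wshift, shift, diag.
  - change (e (S j) 0%nat) with (RtoC 0); ring.
  - change (e (S j) (S m)) with (e j m).
    rewrite e_spec; destruct (Nat.eqb_spec m j) as [->|_]; ring.
Qed.

Lemma wshift_bounded (K : R) : (forall n, Rabs (w n) <= K) -> bounded_op wshift.
Proof.
  intros Hw; destruct (diag_bounded w K Hw) as [Hl2 [Hlin _]].
  split; [|split].
  - intros x Hx; apply shift_l2, Hl2, Hx.
  - intros x y a Hx Hy; unfold wshift; rewrite Hlin by assumption.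
    apply shift_bounded; apply Hl2; assumption.
  - exists K; intros x Hx; unfold wshift.
    rewrite (proj2 (shift_l2 _ (Hl2 x Hx))); apply (diag_l2 w K x Hw Hx).
Qed.

Lemma wshift_polar (K : R) :
  (forall n, 0 < w n <= K) -> polar_decomposition wshift (diag w) shift.
Proof.
  intros Hw.
  assert (Habs : forall n, Rabs (w n) <= K)
    by (intros n; destruct (Hw n); rewrite Rabs_pos_eq; lra).
  assert (Hquad : forall x n, Re (diag w x n * Cconj (x n))%C = w n * Cmod (x n) ^ 2)
    by (intros x n; unfold diag; rewrite Cmod2_alt; destruct (x n); unfold_C; ring).
  split; [exact (diag_bounded w K Habs)|].
  split; [exact shift_bounded|].
  split.
  {
    intros x Hx.
    change (Series (fun n => Im (diag w x n * Cconj (x n))) = 0 /\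
            0 <= Series (fun n => Re (diag w x n * Cconj (x n)))); split.
    - rewrite (Series_single _ 0); [|intros n _]; unfold diag;
        destruct (x _); unfold_C; ring.
    - apply Series_nonneg.
      + intros n; rewrite Hquad; destruct (Hw n).
        apply Rmult_le_pos; [lra|apply pow2_ge_0].
      + refine (@ex_series_le R_AbsRing R_CompleteNormedModule _ _ _
                  (ex_series_scal_l K (fun n => Cmod (x n) ^ 2) Hx)).
        intros n; change (Rabs (Re (diag w x n * Cconj (x n))) <= K * Cmod (x n) ^ 2).
        rewrite Hquad; destruct (Hw n); pose proof (pow2_ge_0 (Cmod (x n))).
        rewrite Rabs_pos_eq by nra; nra. }
  split.
  { (* <(diag w)^2 x, y> = <T x, T y>: drop the vanishing 0-th term of the latter *)
    intros x y _ _; unfold inner; f_equal; symmetry;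
      rewrite Series_incr_1_aux by (unfold wshift, shift; unfold_C; ring);
      apply Series_ext; intros n; unfold wshift, diag, shift;
      destruct (x n), (y n); unfold_C; ring. }
  split; [intros x Hx _; apply shift_l2, Hx|].
  split; [|reflexivity].
  (* shift x = 0 iff x = 0 iff diag w x = 0, since the weights do not vanish *)
  intros x _; split; intros H; apply functional_extensionality; intros [|m];
    try reflexivity; pose proof (equal_f H (S m)) as Hm;
    unfold wshift, shift, diag, zero_vec in *; simpl in *.
  - rewrite Hm; ring.
  - destruct (Hw m); destruct (x m) as [u v]; unfold_C; injection Hm; intros.
    f_equal; nra.
Qed.

Section PolarDecompositionIsForced.

(* Any polar decomposition (P, V) of the weighted shift agrees with the
   canonical one on the basis, so the mean transform is determined. *)
Hypothesis w_pos : forall n, 0 < w n.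
Variables P V : vec -> vec.
Hypothesis HPV : polar_decomposition wshift P V.

(* P^2 = T^*T acts by w_j^2 on e_j, hence P e_j = w_j e_j by positivity. *)
Lemma polar_abs_e (j : nat) : P (e j) = (fun n => (RtoC (w j) * e j n)%C).
Proof.
  destruct HPV as [HP [_ [Hpos [Hsq _]]]].
  apply positive_sqrt_eigen; [exact HP|exact Hpos|apply in_l2_e|apply w_pos|].
  apply functional_extensionality; intros i.
  rewrite <- (coord (P (P (e j))) i), Hsq, !wshift_e by apply in_l2_e.
  rewrite (inner_single _ _ (S i)) by (intros n Hn; rewrite e_out by exact Hn; ring).
  change (e (S j) (S i)) with (e j i); rewrite e_at.
  destruct (Nat.eq_dec i j) as [->|Hij]; [rewrite e_at|rewrite e_out by exact Hij];
    unfold_C; f_equal; ring.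
Qed.

(* From T = V |T|: w_j V e_j = T e_j = w_j e_(j+1), hence V e_j = e_(j+1). *)
Lemma polar_phase_e (j : nat) : V (e j) = e (S j).
Proof.
  pose proof (polar_abs_e j) as HPe.
  destruct HPV as [_ [HV [_ [_ [_ [_ Hfact]]]]]].
  pose proof (Hfact (e j) (in_l2_e j)) as H.
  rewrite HPe, (lin_scal V), wshift_e in H by (exact HV || apply in_l2_e).
  assert (Hwj : RtoC (w j) <> 0%C)
    by (intros Hz; apply (f_equal fst) in Hz; simpl in Hz; pose proof (w_pos j); lra).
  apply functional_extensionality; intros n; pose proof (equal_f H n) as Hn.
  transitivity (/ RtoC (w j) * (RtoC (w j) * V (e j) n))%C; [field; exact Hwj|].
  rewrite <- Hn; field; exact Hwj.
Qed.

Lemma mean_transform_scaled_e (c : C) (j : nat) :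
  mean_transform P V (fun n => (c * e j n)%C) =
  (fun n => (c * RtoC ((w j + w (S j)) / 2) * e (S j) n)%C).
Proof.
  pose proof (polar_phase_e j) as HVe; pose proof (polar_abs_e (S j)) as HPe.
  destruct HPV as [HP [HV [_ [_ [_ [_ Hfact]]]]]].
  unfold mean_transform; apply functional_extensionality; intros n.
  rewrite (lin_scal V), HVe, (lin_scal P), HPe by (assumption || apply in_l2_e).
  rewrite (lin_scal P), (lin_scal V), <- Hfact, wshift_e
    by (assumption || apply in_l2_e || (apply HP, in_l2_e)).
  destruct c, (e (S j) n); unfold_C; f_equal; field.
Qed.

End PolarDecompositionIsForced.

(* If w_j = d_(j+1) / d_j with d bounded above and away from 0, then
   D^-1 T D is the shift for D = diag d, so T is similar to a contraction. *)
Lemma wshift_similar_to_contraction (d : nat -> R) (m M : R) :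
  0 < m -> (forall n, m <= d n <= M) -> (forall n, w n = d (S n) / d n) ->
  similar_to_contraction wshift.
Proof.
  intros Hm Hd Hw.
  assert (Hd0 : forall n, d n <> 0) by (intros n; destruct (Hd n); lra).
  exists (diag d), (diag (fun n => / d n)); split; [|split; [|split; [|split]]].
  - apply (diag_bounded d M); intros n; destruct (Hd n); rewrite Rabs_pos_eq; lra.
  - apply (diag_bounded _ (/ m)); intros n; destruct (Hd n).
    rewrite Rabs_pos_eq by (left; apply Rinv_0_lt_compat; lra).
    apply Rinv_le_contravar; lra.
  - intros x _; apply functional_extensionality; intros n; unfold diag.
    pose proof (Hd0 n); destruct (x n); unfold_C; f_equal; field; assumption.
  - intros x _; apply functional_extensionality; intros n; unfold diag.
    pose proof (Hd0 n); destruct (x n); unfold_C; f_equal; field; assumption.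
  - intros x Hx.
    replace (diag (fun n => / d n) (wshift (diag d x))) with (shift x).
    + rewrite (proj2 (shift_l2 x Hx)); lra.
    + apply functional_extensionality; intros [|k]; unfold wshift, diag, shift.
      * unfold_C; f_equal; ring.
      * rewrite Hw; pose proof (Hd0 k); pose proof (Hd0 (S k)).
        destruct (x k); unfold_C; f_equal; field; auto.
Qed.

End WeightedShift.

Lemma iter_on_basis (A : vec -> vec) (r : R) :
  (forall c j, A (fun n => (c * e j n)%C) = (fun n => (c * RtoC r * e (S j) n)%C)) ->
  forall n, Nat.iter n A (e 0) = (fun k => (RtoC (r ^ n) * e n k)%C).
Proof.
  intros HA n; induction n as [|n IH].
  - apply functional_extensionality; intros k; simpl; ring.
  - change (A (Nat.iter n A (e 0)) = (fun k => (RtoC (r ^ S n) * e (S n) k)%C)).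
    rewrite IH, HA; apply functional_extensionality; intros k.
    rewrite <- RtoC_mult; simpl pow; rewrite (Rmult_comm r); reflexivity.
Qed.

Lemma basis_growth_not_power_bounded (A : vec -> vec) (r : R) :
  1 < r ->
  (forall c j, A (fun n => (c * e j n)%C) = (fun n => (c * RtoC r * e (S j) n)%C)) ->
  ~ power_bounded A.
Proof.
  intros Hr HA [C0 HC].
  destruct (Pow_x_infinity r ltac:(rewrite Rabs_pos_eq; lra) (C0 + 1)) as [N HN].
  assert (Hnorm_e0 : l2norm (e 0) = 1).
  { rewrite <- (l2norm_scaled_e 1 0) by lra; f_equal.
    apply functional_extensionality; intros k; ring. }
  specialize (HC (S N) (e 0) ltac:(lia) (in_l2_e 0)).
  specialize (HN (S N) ltac:(lia)).
  assert (Hpow : 0 <= r ^ S N) by (apply pow_le; lra).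
  rewrite (iter_on_basis A r HA), l2norm_scaled_e, Hnorm_e0 in HC by exact Hpow.
  rewrite Rabs_pos_eq in HN by exact Hpow; lra.
Qed.

(* The example: weights alternating 2, 1/2, which are ratios d_(j+1)/d_j of
   the bounded sequence d = 1, 2, 1, 2, ..., and whose consecutive means are
   all (2 + 1/2)/2 = 5/4 > 1. *)
Definition alpha (n : nat) : R := if Nat.even n then 2 else / 2.
Definition dd (n : nat) : R := if Nat.even n then 1 else 2.

Lemma alpha_bounds (n : nat) : 0 < alpha n <= 2.
Proof. unfold alpha; destruct (Nat.even n); lra. Qed.

Lemma dd_bounds (n : nat) : 1 <= dd n <= 2.
Proof. unfold dd; destruct (Nat.even n); lra. Qed.

Lemma alpha_ratio (n : nat) : alpha n = dd (S n) / dd n.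
Proof.
  unfold alpha, dd; rewrite Nat.even_succ, <- Nat.negb_even.
  destruct (Nat.even n); simpl; field.
Qed.

Lemma alpha_mean (n : nat) : (alpha n + alpha (S n)) / 2 = 5 / 4.
Proof.
  unfold alpha; rewrite Nat.even_succ, <- Nat.negb_even.
  destruct (Nat.even n); simpl; field.
Qed.

Theorem mainTheorem11 :
  exists T : vec -> vec,
    bounded_op T /\ similar_to_contraction T /\
    (exists P V, polar_decomposition T P V) /\
    (forall P V, polar_decomposition T P V ->
       ~ power_bounded (mean_transform P V)).
Proof.
  exists (wshift alpha); split; [|split; [|split]].
  - apply (wshift_bounded alpha 2); intros n.
    destruct (alpha_bounds n); rewrite Rabs_pos_eq; lra.
  - exact (wshift_similar_to_contraction alpha dd 1 2 Rlt_0_1 dd_bounds alpha_ratio).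
  - exists (diag alpha), shift; exact (wshift_polar alpha 2 alpha_bounds).
  - intros P V HPV; apply (basis_growth_not_power_bounded _ (5 / 4)); [lra|].
    intros c j; rewrite <- (alpha_mean j).
    apply (mean_transform_scaled_e alpha (fun n => proj1 (alpha_bounds n)) P V HPV).
Qed.
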